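(* Let $n\geq 3$, $x_n=2\cos(\pi/n)$, and let $c$ be a real number with $c\leq 1$ and $c\leq x_n^2-2$. Then there is a real $y_c$ with $y_c\geq 2$ and $y_c\geq x_n^2-1$ such that $\lambda(x_n,y_c)=c$ and $\alpha(x_n,y_c)<0$.
   Context: $\lambda(x,y)=9x^2-12x^4+4x^6-5y+10x^2y+2x^4y-4x^6y-11x^2y^2+8x^4y^2+x^6y^2+5y^3-4x^2y^3-3x^4y^3+3x^2y^4-y^5$ and $\alpha(x,y)=1-4x^2+2x^4+2y-x^2y-x^4y-y^2+2x^2y^2-y^3$. *)

From Stdlib Require Import Reals.
Open Scope R_scope.

Definition lambda (x y : R) : R :=
  9*x^2 - 12*x^4 + 4*x^6 - 5*y + 10*x^2*y + 2*x^4*y - 4*x^6*y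
  - 11*x^2*y^2 + 8*x^4*y^2 + x^6*y^2 + 5*y^3 - 4*x^2*y^3 - 3*x^4*y^3
  + 3*x^2*y^4 - y^5.

Definition alpha (x y : R) : R :=
  1 - 4*x^2 + 2*x^4 + 2*y - x^2*y - x^4*y - y^2 + 2*x^2*y^2 - y^3.

Definition xn (n : nat) : R := 2 * cos (PI / INR n).

(** Everything depends on x only through t = x^2, and x_n^2 lies in [1, 4].
    From the starting point y0 = max(2, t - 1), where lambda equals
    min(1, t - 2) >= c, lambda decreases at least with slope 1 while alpha
    stays negative: after the shift y = y0 + s both become polynomials in s
    whose coefficients are nonpositive for t in [1, 3] resp. [3, 4].  The
    intermediate value theorem then produces y_c. *)

From Stdlib Require Import Reals Lra Psatz.
Open Scope R_scope.

Lemma IVT_unit_slope (f : R -> R) (a c : R) :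
  continuity f -> c <= f a ->
  (forall s, 0 <= s -> f (a + s) <= f a - s) ->
  exists y, a <= y /\ f y = c.
Proof.
  intros Hf Hc Hslope.
  pose proof (Hslope (f a - c) ltac:(lra)) as Hfb.
  destruct (IVT_cor (fun y => f y - c) a (a + (f a - c))) as [y [[Hay _] Hy]].
  - intro y; reg; apply Hf.
  - lra.
  - nra.
  - exists y; split; [exact Hay | lra].
Qed.

Lemma horner_step_nonpos (s a p : R) : 0 <= s -> a <= 0 -> p <= 0 -> a + s * p <= 0.
Proof. intros; nra. Qed.

Definition lambda_sq (t y : R) : R :=
  9*t - 12*t^2 + 4*t^3 - 5*y + 10*t*y + 2*t^2*y - 4*t^3*y
  - 11*t*y^2 + 8*t^2*y^2 + t^3*y^2 + 5*y^3 - 4*t*y^3 - 3*t^2*y^3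
  + 3*t*y^4 - y^5.

Definition alpha_sq (t y : R) : R :=
  1 - 4*t + 2*t^2 + 2*y - t*y - t^2*y - y^2 + 2*t*y^2 - y^3.

Lemma lambda_eq_sq (x y : R) : lambda x y = lambda_sq (x^2) y.
Proof. unfold lambda, lambda_sq; ring. Qed.

Lemma alpha_eq_sq (x y : R) : alpha x y = alpha_sq (x^2) y.
Proof. unfold alpha, alpha_sq; ring. Qed.

Lemma lambda_sq_at_2 (t : R) : lambda_sq t 2 = t - 2.
Proof. unfold lambda_sq; ring. Qed.

Lemma lambda_sq_at_pred (t : R) : lambda_sq t (t - 1) = 1.
Proof. unfold lambda_sq; ring. Qed.

Section LowRange.

Variables t s : R.
Hypotheses (Ht : 1 <= t <= 3) (Hs : 0 <= s).

Lemma lambda_sq_slope_low : lambda_sq t (2 + s) <= lambda_sq t 2 - s.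
Proof.
  assert (E : lambda_sq t (2 + s) = lambda_sq t 2 - s
    + s * ((-24 + 14*t - 2*t^2) + s * ((-50 + 37*t - 10*t^2 + t^3)
        + s * ((-35 + 20*t - 3*t^2) + s * ((-10 + 3*t) + s * (-1))))))
    by (unfold lambda_sq; ring).
  (* -50 + 37 t - 10 t^2 + t^3 = (t - 3) (t^2 - 7 t + 16) - 2 *)
  assert (Hcubic : -50 + 37*t - 10*t^2 + t^3 <= 0).
  { assert (0 < t^2 - 7*t + 16) by nra.
    assert ((t - 3) * (t^2 - 7*t + 16) <= 0) by nra. nra. }
  assert (HP : (-24 + 14*t - 2*t^2) + s * ((-50 + 37*t - 10*t^2 + t^3)
        + s * ((-35 + 20*t - 3*t^2) + s * ((-10 + 3*t) + s * (-1)))) <= 0).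
  { repeat (apply horner_step_nonpos; [assumption | |]); nra. }
  nra.
Qed.

Lemma alpha_sq_neg_low : alpha_sq t (2 + s) < 0.
Proof.
  assert (E : alpha_sq t (2 + s) = (-7 + 2*t)
    + s * ((-14 + 7*t - t^2) + s * ((-7 + 2*t) + s * (-1))))
    by (unfold alpha_sq; ring).
  assert (HP : (-14 + 7*t - t^2) + s * ((-7 + 2*t) + s * (-1)) <= 0).
  { repeat (apply horner_step_nonpos; [assumption | |]); nra. }
  nra.
Qed.

End LowRange.

Section HighRange.

Variables t s : R.
Hypotheses (Ht : 3 <= t <= 4) (Hs : 0 <= s).

Lemma lambda_sq_slope_high : lambda_sq t (t - 1 + s) <= lambda_sq t (t - 1) - s.
Proof.
  assert (E : lambda_sq t (t - 1 + s) = lambda_sq t (t - 1) - s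
    + s * ((6 - 2*t) + s * ((-5 + 4*t - t^2)
        + s * ((-5 + 4*t - t^2) + s * ((5 - 2*t) + s * (-1))))))
    by (unfold lambda_sq; ring).
  assert (HP : (6 - 2*t) + s * ((-5 + 4*t - t^2)
        + s * ((-5 + 4*t - t^2) + s * ((5 - 2*t) + s * (-1)))) <= 0).
  { repeat (apply horner_step_nonpos; [assumption | |]); nra. }
  nra.
Qed.

Lemma alpha_sq_neg_high : alpha_sq t (t - 1 + s) < 0.
Proof.
  assert (E : alpha_sq t (t - 1 + s) =
    -1 + s * ((1 - t) + s * ((2 - t) + s * (-1)))) by (unfold alpha_sq; ring).
  assert (HP : (1 - t) + s * ((2 - t) + s * (-1)) <= 0).
  { repeat (apply horner_step_nonpos; [assumption | |]); lra. }
  nra.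
Qed.

End HighRange.

Lemma lambda_continuous (x : R) : continuity (lambda x).
Proof. unfold lambda; reg. Qed.

Lemma exists_lambda_level_alpha_neg (x c : R) :
  1 <= x^2 <= 4 -> c <= 1 -> c <= x^2 - 2 ->
  exists y, 2 <= y /\ x^2 - 1 <= y /\ lambda x y = c /\ alpha x y < 0.
Proof.
  intros Hx Hc1 Hc2.
  destruct (Rle_lt_dec (x^2) 3) as [Hlow | Hhigh].
  - destruct (IVT_unit_slope (lambda x) 2 c (lambda_continuous x)) as [y [Hy Hlam]].
    + rewrite lambda_eq_sq, lambda_sq_at_2; exact Hc2.
    + intros s Hs; rewrite !lambda_eq_sq; apply lambda_sq_slope_low; lra.
    + exists y; repeat split; try lra.
      rewrite alpha_eq_sq; replace y with (2 + (y - 2)) by ring.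
      apply alpha_sq_neg_low; lra.
  - destruct (IVT_unit_slope (lambda x) (x^2 - 1) c (lambda_continuous x))
      as [y [Hy Hlam]].
    + rewrite lambda_eq_sq, lambda_sq_at_pred; exact Hc1.
    + intros s Hs; rewrite !lambda_eq_sq; apply lambda_sq_slope_high; lra.
    + exists y; repeat split; try lra.
      rewrite alpha_eq_sq; replace y with (x^2 - 1 + (y - (x^2 - 1))) by ring.
      apply alpha_sq_neg_high; lra.
Qed.

Lemma xn_bounds (n : nat) : (3 <= n)%nat -> 1 <= xn n <= 2.
Proof.
  intro Hn; unfold xn.
  assert (Hn' : 3 <= INR n) by (replace 3 with (INR 3) by (simpl; lra); apply le_INR; exact Hn).
  pose proof PI_RGT_0.
  assert (Hpos : 0 < PI / INR n) by (apply Rdiv_lt_0_compat; lra).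
  assert (Hle : PI / INR n <= PI / 3).
  { apply Rmult_le_compat_l; [lra |]. apply Rinv_le_contravar; lra. }
  assert (Hcos : cos (PI / 3) <= cos (PI / INR n)).
  { destruct (Req_dec (PI / INR n) (PI / 3)) as [-> | Hne]; [lra |].
    left; apply cos_decreasing_1; lra. }
  rewrite cos_PI3 in Hcos.
  pose proof (COS_bound (PI / INR n)); lra.
Qed.

Theorem proposition6p9 (n : nat) (c : R) :
  (3 <= n)%nat ->
  c <= 1 ->
  c <= (xn n)^2 - 2 ->
  exists yc : R,
    2 <= yc /\ (xn n)^2 - 1 <= yc /\
    lambda (xn n) yc = c /\ alpha (xn n) yc < 0.
Proof.
  intros Hn Hc1 Hc2.
  apply exists_lambda_level_alpha_neg; [| exact Hc1 | exact Hc2].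
  pose proof (xn_bounds n Hn); nra.
Qed.
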